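(* Let $X=Y=\mathbb Z$ with $d(n,m)=|n-m|$, and let $f_1=\mathrm{id}_{\mathbb Z}$, $f_2(n)=-n$. Then there is no metric $d\in D(\mathbb Z,\mathbb Z)$ with $M_{d_{f_1}}(\mathbb Z,\mathbb Z)\subset M_d(\mathbb Z,\mathbb Z)$ and $M_{d_{f_2}}(\mathbb Z,\mathbb Z)\subset M_d(\mathbb Z,\mathbb Z)$; in particular the preorder $\preceq$ on $D(\mathbb Z,\mathbb Z)$ is not upwards directed.
   Context: $D(X,Y)$: metrics on $X\sqcup Y$ extending $d_X,d_Y$. $M_d(X,Y)$: norm closure of bounded operators $T:l^2(X)\to l^2(Y)$ with finite propagation (there is $L$ with $\langle T\delta_x,\delta_y\rangle=0$ whenever $d(x,y)\ge L$). $d\preceq d'$ means $M_d\subset M_{d'}$. For an almost isometry $f:X\to Y$ (i.e. $d_X(x,x')-C\le d_Y(f(x),f(x'))\le d_X(x,x')+C$ for some $C>0$), $d_f$ is the metric extending $d_X,d_Y$ with $d_f(x,y)=\inf_{\tilde x\in X}(d_X(x,\tilde x)+C/2+d_Y(f(\tilde x),y))$. *)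

From Stdlib Require Import Reals ZArith List Classical ClassicalEpsilon.
Open Scope R_scope.

Definition C := (R * R)%type.
Definition C0 : C := (0, 0).
Definition Cadd (a b : C) : C := (fst a + fst b, snd a + snd b).
Definition Copp (a : C) : C := (- fst a, - snd a).
Definition Cmul (a b : C) : C :=
  (fst a * fst b - snd a * snd b, fst a * snd b + snd a * fst b).
Definition Cnorm2 (a : C) : R := fst a * fst a + snd a * snd a.

Definition Csum (f : Z -> C) (l : list Z) : C :=
  fold_right (fun x acc => Cadd (f x) acc) C0 l.
Definition Rsum (f : Z -> R) (l : list Z) : R :=
  fold_right (fun x acc => f x + acc) 0 l.

(* ---------- operators l^2(Z) -> l^2(Z) via matrix entries ----------
   A kernel k represents the operator T with  k x y = <T delta_x, delta_y>,
   x in X = Z (domain), y in Y = Z (codomain); so (T v)_y = sum_x k x y v_x.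
   [op_norm_le k c] says: T is bounded with operator norm <= c, tested on all
   finitely supported vectors v (support in the duplicate-free list xs) and
   all finite sets ys of output coordinates. *)
Definition kernel := Z -> Z -> C.

Definition op_norm_le (k : kernel) (c : R) : Prop :=
  0 <= c /\
  forall (xs ys : list Z) (v : Z -> C), NoDup xs -> NoDup ys ->
    Rsum (fun y => Cnorm2 (Csum (fun x => Cmul (k x y) (v x)) xs)) ys
    <= c * c * Rsum (fun x => Cnorm2 (v x)) xs.

Definition bounded_op (k : kernel) : Prop := exists c, op_norm_le k c.

Definition ksub (k s : kernel) : kernel := fun x y => Cadd (k x y) (Copp (s x y)).

Definition ZZ := (Z + Z)%type.

Definition is_metric (d : ZZ -> ZZ -> R) : Prop :=
  (forall p q, 0 <= d p q) /\
  (forall p q, d p q = 0 <-> p = q) /\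
  (forall p q, d p q = d q p) /\
  (forall p q r, d p r <= d p q + d q r).

Definition inD (d : ZZ -> ZZ -> R) : Prop :=
  is_metric d /\
  (forall a b, d (inl a) (inl b) = Rabs (IZR (a - b))) /\
  (forall a b, d (inr a) (inr b) = Rabs (IZR (a - b))).

Definition finite_prop (d : ZZ -> ZZ -> R) (k : kernel) : Prop :=
  exists L, forall x y, L <= d (inl x) (inr y) -> k x y = C0.

Definition inM (d : ZZ -> ZZ -> R) (k : kernel) : Prop :=
  bounded_op k /\
  forall eps, 0 < eps ->
    exists s, bounded_op s /\ finite_prop d s /\ op_norm_le (ksub k s) eps.

Definition preceq (d d' : ZZ -> ZZ -> R) : Prop :=
  forall k, inM d k -> inM d' k.

(* ---------- infimum of a set of reals (0 if it has none) ---------- *)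
Definition is_inf (E : R -> Prop) (m : R) : Prop :=
  (forall x, E x -> m <= x) /\
  (forall m', (forall x, E x -> m' <= x) -> m' <= m).

Definition Rinf (E : R -> Prop) : R :=
  match excluded_middle_informative (exists m, is_inf E m) with
  | left H => proj1_sig (constructive_indefinite_description _ H)
  | right _ => 0
  end.

Definition df_cross (f : Z -> Z) (Cf : R) (x y : Z) : R :=
  Rinf (fun r => exists t : Z,
          r = Rabs (IZR (x - t)) + Cf / 2 + Rabs (IZR (f t - y))).

Definition d_f (f : Z -> Z) (Cf : R) (p q : ZZ) : R :=
  match p, q with
  | inl a, inl b => Rabs (IZR (a - b))
  | inr a, inr b => Rabs (IZR (a - b))
  | inl x, inr y => df_cross f Cf x y
  | inr y, inl x => df_cross f Cf x y
  end.

Definition almost_isometry (f : Z -> Z) (Cf : R) : Prop :=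
  0 < Cf /\
  forall a b, Rabs (IZR (a - b)) - Cf <= Rabs (IZR (f a - f b)) <= Rabs (IZR (a - b)) + Cf.

Definition f1 (n : Z) : Z := n.
Definition f2 (n : Z) : Z := (- n)%Z.

From Pilot Require Import Defs.
From Stdlib Require Import Reals ZArith List Lra Lia ClassicalEpsilon.
Open Scope R_scope.

(* For an injective g : Z -> Z let [graph_kernel g] be the matrix
   of the partial isometry delta_x |-> delta_(g x).  It has norm <= 1, and it
   belongs to M_d exactly when d "tracks" g, i.e. when the cross distances
   d(x, g x) are bounded: if they are, the operator has finite propagation;
   conversely every operator of M_d has entries of modulus < 1/2 far from the
   diagonal, while all entries k(x, g x) have modulus 1.  Hence d <= d' carries
   tracking of g from d to d'.  But no metric d in D(Z,Z) tracks both the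
   identity f1 and the reflection f2 : n |-> -n, because the triangle
   inequality gives 2|n| = d(n_Y, (-n)_Y) <= d(n_X, n_Y) + d(n_X, (-n)_Y).
   Since d_f tracks f (with bound C/2), the first claim follows; for the second
   we exhibit two metrics in D(Z,Z) tracking f1 and f2 respectively: the
   "graph metrics" with cross distance |phi a - b| + 1 for an isometry phi. *)

Lemma Cnorm2_nonneg (a : Defs.C) : 0 <= Cnorm2 a.
Proof. destruct a; unfold Cnorm2; simpl; nra. Qed.

Lemma Rsum_ext (f h : Z -> R) (l : list Z) :
  (forall y, f y = h y) -> Rsum f l = Rsum h l.
Proof. intros H; induction l; simpl; auto. rewrite IHl, H; auto. Qed.

Lemma Rsum_nonneg (f : Z -> R) (l : list Z) : (forall y, 0 <= f y) -> 0 <= Rsum f l.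
Proof. intros H; induction l; simpl; [lra|]. specialize (H a). lra. Qed.

Lemma Rsum_zero (l : list Z) : Rsum (fun _ => 0) l = 0.
Proof. induction l; simpl; auto. rewrite IHl; ring. Qed.

Lemma Rsum_notin (z : Z) (a : R) (b : Z -> R) (ys : list Z) : ~ In z ys ->
  Rsum (fun y => if Z.eq_dec y z then a else b y) ys = Rsum b ys.
Proof.
  induction ys as [|y ys IH]; simpl; intros Hn; auto.
  destruct (Z.eq_dec y z); [exfalso; auto|]. rewrite IH; auto.
Qed.

Lemma Rsum_if (z : Z) (a : R) (b : Z -> R) (ys : list Z) :
  NoDup ys -> 0 <= a -> (forall y, 0 <= b y) ->
  Rsum (fun y => if Z.eq_dec y z then a else b y) ys <= a + Rsum b ys.
Proof.
  induction ys as [|y ys IH]; simpl; intros Hnd Ha Hb; [lra|].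
  inversion Hnd as [|? ? Hn Hnd']; subst.
  destruct (Z.eq_dec y z).
  - subst. rewrite Rsum_notin; auto. specialize (Hb z); lra.
  - specialize (IH Hnd' Ha Hb). lra.
Qed.

Lemma op_norm_le_zero (k : kernel) (c : R) :
  0 <= c -> (forall x y, k x y = C0) -> op_norm_le k c.
Proof.
  intros Hc Hk. split; [exact Hc|]. intros xs ys v _ _.
  assert (Hcol : forall y, Csum (fun x => Cmul (k x y) (v x)) xs = C0).
  { intros y; induction xs as [|a xs IH]; simpl; auto.
    rewrite IH, Hk. destruct (v a); unfold Cadd, Cmul, C0; simpl; f_equal; ring. }
  rewrite (Rsum_ext _ (fun _ => 0)).
  - rewrite Rsum_zero. apply Rmult_le_pos; [nra|].
    apply Rsum_nonneg; intros; apply Cnorm2_nonneg.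
  - intros y. rewrite Hcol. unfold Cnorm2, C0; simpl; ring.
Qed.

(* Each matrix entry is bounded by the operator norm: test on delta_x, delta_y. *)
Lemma entry_le_norm (k : kernel) (c : R) (x y : Z) :
  op_norm_le k c -> Cnorm2 (k x y) <= c * c.
Proof.
  intros [_ H].
  assert (Hsingle : forall z : Z, NoDup (z :: nil))
    by (intros; constructor; [simpl; tauto | constructor]).
  specialize (H (x :: nil) (y :: nil) (fun _ => (1, 0)) (Hsingle x) (Hsingle y)).
  simpl in H. destruct (k x y). unfold Cnorm2, Cadd, Cmul, C0 in *; simpl in *. nra.
Qed.

Lemma finite_prop_inM (d : ZZ -> ZZ -> R) (k : kernel) :
  bounded_op k -> finite_prop d k -> inM d k.
Proof.
  intros Hb Hf. split; [exact Hb|]. intros eps Heps.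
  exists k. split; [exact Hb|]. split; [exact Hf|].
  apply op_norm_le_zero; [lra|]. intros x y. unfold ksub.
  destruct (k x y); unfold Cadd, Copp, C0; simpl; f_equal; ring.
Qed.

Lemma inM_entries_decay (d : ZZ -> ZZ -> R) (k : kernel) (eps : R) :
  inM d k -> 0 < eps ->
  exists L, forall x y, L <= d (inl x) (inr y) -> Cnorm2 (k x y) <= eps * eps.
Proof.
  intros [_ Happrox] Heps.
  destruct (Happrox eps Heps) as [s [_ [[L HL] Hks]]].
  exists L. intros x y Hxy.
  pose proof (entry_le_norm _ _ x y Hks) as E.
  unfold ksub in E. rewrite (HL x y Hxy) in E.
  destruct (k x y); unfold Cnorm2, Cadd, Copp, C0 in *; simpl in *.
  replace (r * r + r0 * r0) with ((r + - 0) * (r + - 0) + (r0 + - 0) * (r0 + - 0))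
    by ring.
  exact E.
Qed.

Definition graph_kernel (g : Z -> Z) : kernel :=
  fun x y => if Z.eq_dec y (g x) then (1, 0) else C0.

Section GraphKernel.
Variable g : Z -> Z.
Hypothesis g_inj : forall a b, g a = g b -> a = b.

Definition image_coord (v : Z -> Defs.C) (xs : list Z) (y : Z) : Defs.C :=
  Csum (fun x => Cmul (graph_kernel g x y) (v x)) xs.

Lemma image_coord_off (v : Z -> Defs.C) (xs : list Z) (y : Z) :
  (forall x, In x xs -> y <> g x) -> image_coord v xs y = C0.
Proof.
  unfold image_coord. induction xs as [|a xs IH]; simpl; intros H; auto.
  rewrite IH by (intros; apply H; auto).
  unfold graph_kernel; destruct (Z.eq_dec y (g a)); [exfalso; apply (H a); auto|].
  destruct (v a); unfold Cadd, Cmul, C0; simpl; f_equal; ring.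
Qed.

Lemma image_coord_cons (v : Z -> Defs.C) (a : Z) (xs : list Z) (y : Z) :
  ~ In a xs ->
  Cnorm2 (image_coord v (a :: xs) y)
  = if Z.eq_dec y (g a) then Cnorm2 (v a) else Cnorm2 (image_coord v xs y).
Proof.
  intros Ha. destruct (Z.eq_dec y (g a)) as [->|ne].
  - assert (Hoff : image_coord v xs (g a) = C0).
    { apply image_coord_off. intros x Hx Heq. apply g_inj in Heq. subst; auto. }
    unfold image_coord in *; simpl. rewrite Hoff.
    unfold graph_kernel. destruct (Z.eq_dec (g a) (g a)); [|congruence].
    destruct (v a); unfold Cnorm2, Cadd, Cmul, C0; simpl; ring.
  - unfold image_coord; simpl. unfold graph_kernel at 1.
    destruct (Z.eq_dec y (g a)); [congruence|].
    destruct (Csum _ xs), (v a); unfold Cnorm2, Cadd, Cmul, C0; simpl; ring.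
Qed.

Lemma image_coord_energy (v : Z -> Defs.C) (xs ys : list Z) :
  NoDup xs -> NoDup ys ->
  Rsum (fun y => Cnorm2 (image_coord v xs y)) ys <= Rsum (fun x => Cnorm2 (v x)) xs.
Proof.
  induction xs as [|a xs IH]; intros Hxs Hys.
  - unfold image_coord; simpl.
    rewrite (Rsum_ext _ (fun _ => 0)) by (intros; unfold Cnorm2, C0; simpl; ring).
    rewrite Rsum_zero; lra.
  - inversion Hxs as [|? ? Ha Hxs']; subst. simpl.
    rewrite (Rsum_ext _ _ _ (fun y => image_coord_cons v a xs y Ha)).
    eapply Rle_trans.
    + apply Rsum_if; auto using Cnorm2_nonneg.
    + specialize (IH Hxs' Hys). lra.
Qed.

Lemma graph_kernel_norm : op_norm_le (graph_kernel g) 1.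
Proof.
  split; [lra|]. intros xs ys v Hxs Hys. rewrite !Rmult_1_l.
  exact (image_coord_energy v xs ys Hxs Hys).
Qed.
End GraphKernel.

Definition tracks (d : ZZ -> ZZ -> R) (g : Z -> Z) : Prop :=
  exists B, forall x, d (inl x) (inr (g x)) <= B.

Lemma tracks_inM (d : ZZ -> ZZ -> R) (g : Z -> Z) :
  (forall a b, g a = g b -> a = b) -> tracks d g -> inM d (graph_kernel g).
Proof.
  intros g_inj [B HB]. apply finite_prop_inM.
  - exists 1. apply graph_kernel_norm; exact g_inj.
  - exists (B + 1). intros x y HL. unfold graph_kernel.
    destruct (Z.eq_dec y (g x)) as [->|]; auto. specialize (HB x). lra.
Qed.

Lemma inM_tracks (d : ZZ -> ZZ -> R) (g : Z -> Z) :
  inM d (graph_kernel g) -> tracks d g.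
Proof.
  intros Hk. destruct (inM_entries_decay d _ (1/2) Hk) as [L HL]; [lra|].
  exists L. intros x. destruct (Rle_lt_dec L (d (inl x) (inr (g x)))) as [Hfar|]; [|lra].
  specialize (HL x (g x) Hfar). unfold graph_kernel in HL.
  destruct (Z.eq_dec (g x) (g x)); [|congruence].
  unfold Cnorm2 in HL; simpl in HL. lra.
Qed.

Lemma tracks_preceq (d d' : ZZ -> ZZ -> R) (g : Z -> Z) :
  (forall a b, g a = g b -> a = b) -> preceq d d' -> tracks d g -> tracks d' g.
Proof. intros g_inj Hle Hd. apply inM_tracks, Hle, tracks_inM; assumption. Qed.

Lemma no_metric_tracks_id_and_reflection (d : ZZ -> ZZ -> R) :
  inD d -> tracks d f1 -> tracks d f2 -> False.
Proof.
  intros [[_ [_ [Hsym Htri]]] [_ HY]] [B1 H1] [B2 H2].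
  set (n := up (Rabs (B1 + B2))).
  destruct (archimed (Rabs (B1 + B2))) as [Hn _]. fold n in Hn.
  pose proof (Htri (inr n) (inl n) (inr (- n)%Z)) as T.
  rewrite HY, (Hsym (inr n)), minus_IZR, opp_IZR in T.
  specialize (H1 n). specialize (H2 n). unfold f1, f2 in H1, H2.
  pose proof (Rle_abs (B1 + B2)). pose proof (Rabs_pos (B1 + B2)).
  rewrite Rabs_right in T by lra. lra.
Qed.

Lemma Rinf_le (E : R -> Prop) (e : R) : E e -> (forall r, E r -> e <= r) -> Rinf E <= e.
Proof.
  intros He Hlow. unfold Rinf. destruct (excluded_middle_informative _) as [h|n].
  - destruct (constructive_indefinite_description _ h) as [m Hm]; simpl.
    apply (proj1 Hm); auto.
  - exfalso. apply n. exists e. split; auto.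
Qed.

(* d_f tracks f: the choice t = x in the infimum gives d_f(x, f x) <= C/2. *)
Lemma d_f_tracks (f : Z -> Z) (Cf : R) : tracks (d_f f Cf) f.
Proof.
  exists (Cf / 2). intros x. simpl. unfold df_cross. apply Rinf_le.
  - exists x. rewrite !Z.sub_diag, Rabs_R0. ring.
  - intros r [t ->]. pose proof (Rabs_pos (IZR (x - t))).
    pose proof (Rabs_pos (IZR (f t - f x))). lra.
Qed.

Definition graph_zdist (phi : Z -> Z) (p q : ZZ) : Z :=
  match p, q with
  | inl a, inl b | inr a, inr b => Z.abs (a - b)
  | inl a, inr b | inr b, inl a => Z.abs (phi a - b) + 1
  end.

Definition graph_metric (phi : Z -> Z) (p q : ZZ) : R := IZR (graph_zdist phi p q).

Lemma graph_metric_inD (phi : Z -> Z) :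
  (forall a b, Z.abs (phi a - phi b) = Z.abs (a - b)) -> inD (graph_metric phi).
Proof.
  intros Hiso. unfold graph_metric.
  split; [|split; intros; simpl; apply abs_IZR].
  split; [|split; [|split]].
  - intros [a|a] [b|b]; apply IZR_le; simpl; lia.
  - intros p q; split.
    + intros H. apply eq_IZR in H. destruct p as [a|a], q as [b|b]; simpl in H;
        f_equal; lia.
    + intros ->. destruct q; simpl; rewrite Z.sub_diag; reflexivity.
  - intros [a|a] [b|b]; simpl; f_equal; lia.
  - intros [a|a] [b|b] [c|c]; rewrite <- plus_IZR; apply IZR_le; simpl;
      pose proof (Hiso a b); pose proof (Hiso a c); pose proof (Hiso b c); lia.
Qed.

Lemma graph_metric_tracks (phi : Z -> Z) : tracks (graph_metric phi) phi.
Proof.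
  exists 1. intros x. unfold graph_metric; simpl. rewrite Z.sub_diag. simpl. lra.
Qed.

Lemma no_common_upper_bound (d1 d2 : ZZ -> ZZ -> R) :
  tracks d1 f1 -> tracks d2 f2 ->
  ~ exists d, inD d /\ preceq d1 d /\ preceq d2 d.
Proof.
  intros T1 T2 [d [Hd [P1 P2]]].
  apply (no_metric_tracks_id_and_reflection d Hd).
  - apply (tracks_preceq d1); [unfold f1; auto | exact P1 | exact T1].
  - apply (tracks_preceq d2); [unfold f2; intros; lia | exact P2 | exact T2].
Qed.

Theorem mainTheorem18 (C1 C2 : R) :
  almost_isometry f1 C1 -> almost_isometry f2 C2 ->
  (~ exists d, inD d /\ preceq (d_f f1 C1) d /\ preceq (d_f f2 C2) d) /\
  (~ forall d1 d2, inD d1 -> inD d2 ->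
       exists d, inD d /\ preceq d1 d /\ preceq d2 d).
Proof.
  intros _ _. split.
  - apply no_common_upper_bound; apply d_f_tracks.
  - intros Hdirected.
    apply (no_common_upper_bound (graph_metric f1) (graph_metric f2));
      [apply graph_metric_tracks | apply graph_metric_tracks |].
    apply Hdirected; apply graph_metric_inD; unfold f1, f2; intros; lia.
Qed.
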